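(* Consider a population of $N$ units, $M$ of which have a certain attribute; $n$ units are drawn without replacement and $K$ is the number of drawn units having the attribute, so that $\Pr\{K=k\mid M\}=\binom Mk\binom{N-M}{n-k}/\binom Nn$, $k=0,1,\dots,n$. Let $I_K$ be the support of $K$, and let $\widehat M=\widehat M(k)$ be a function of $k\in I_K$ taking values in $\{m\in\mathbb{Z}:k\le m\le N\}$. Then $$\Pr\{K\le k\mid M\}\le\frac{\binom Mk\binom{N-M}{n-k}}{\binom{\widehat M}{k}\binom{N-\widehat M}{n-k}}\quad\text{for } k\in I_K\text{ such that }\widehat M(k)\le M,$$ $$\Pr\{K\ge k\mid M\}\le\frac{\binom Mk\binom{N-M}{n-k}}{\binom{\widehat M}{k}\binom{N-\widehat M}{n-k}}\quad\text{for } k\in I_K\text{ such that }\widehat M(k)\ge M.$$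
   Context: $\Pr\{\cdot\mid M\}$ denotes probability when the population contains $M$ units with the attribute. *)

From mathcomp Require Import all_boot all_order all_algebra.
Set Implicit Arguments. Unset Strict Implicit. Unset Printing Implicit Defensive.
Import Order.TTheory GRing.Theory Num.Theory.
Local Open Scope ring_scope.

Definition hyp (R : realFieldType) (N n M k : nat) : R :=
  ('C(M, k) * 'C(N - M, n - k))%:R / ('C(N, n))%:R.

Definition hyp_le (R : realFieldType) (N n M k : nat) : R :=
  \sum_(0 <= j < k.+1) hyp R N n M j.

Definition hyp_ge (R : realFieldType) (N n M k : nat) : R :=
  \sum_(k <= j < n.+1) hyp R N n M j.

Definition in_support (N n M k : nat) : bool :=
  (k <= n)%N && (0 < 'C(M, k) * 'C(N - M, n - k))%N.

(* The hypergeometric weights [h m j = 'C(m, j) * 'C(N - m, n - j)] are totally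
   positive of order two in (m, j): for [m' <= m] and [j <= k],
   h m j * h m' k <= h m k * h m' j, a consequence of the cross inequality
   'C(y, p) * 'C(x, q) <= 'C(y, q) * 'C(x, p) (x <= y, p <= q) applied to both
   binomial factors.  Summing over [j <= k] and bounding the partial sum of
   [h m' j] by the full one, which is 'C(N, n) by Vandermonde, gives
   Pr{K <= k | m} * h m' k <= h m k; the upper tail is symmetric. *)
From mathcomp Require Import all_boot all_order all_algebra.
Import Order.TTheory GRing.Theory Num.Theory.

Lemma leq_bin_cross {x y p q : nat} : x <= y -> p <= q ->
  'C(y, p) * 'C(x, q) <= 'C(y, q) * 'C(x, p).
Proof.
move=> le_xy; elim: q => [|q IHq]; first by rewrite leqn0 => /eqP ->.
rewrite leq_eqVlt => /orP [/eqP -> // | le_pq].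
have {}IHq := IHq le_pq.
rewrite -(@leq_pmul2l q.+1) // (mulnCA q.+1) mul_bin_left (mulnA q.+1) mul_bin_left.
rewrite -mulnA (mulnCA ('C(y, p))).
apply: leq_trans (leq_mul (leqnn (x - q)) IHq) _.
by rewrite leq_mul2r leq_sub2r ?orbT.
Qed.

Definition hyper_weight (N n m j : nat) := 'C(m, j) * 'C(N - m, n - j).

Lemma hyper_weight_cross (N n m' m j k : nat) : m' <= m -> j <= k ->
  hyper_weight N n m j * hyper_weight N n m' k <=
  hyper_weight N n m k * hyper_weight N n m' j.
Proof.
move=> le_m le_j; rewrite /hyper_weight (mulnACA 'C(m, j)) (mulnACA 'C(m, k)).
rewrite (mulnC 'C(N - m, n - j)) (mulnC 'C(N - m, n - k)).
exact: leq_mul (leq_bin_cross le_m le_j)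
               (leq_bin_cross (leq_sub2l N le_m) (leq_sub2l n le_j)).
Qed.

Lemma sum_hyper_weight (N n m : nat) : m <= N ->
  \sum_(0 <= j < n.+1) hyper_weight N n m j = 'C(N, n).
Proof. by move=> le_mN; rewrite big_mkord /hyper_weight binomial.Vandermonde subnKC. Qed.

Lemma hyper_weight_lower_tail (N n m' m k : nat) : m' <= m -> m' <= N -> k <= n ->
  (\sum_(0 <= j < k.+1) hyper_weight N n m j) * hyper_weight N n m' k <=
  hyper_weight N n m k * 'C(N, n).
Proof.
move=> le_m le_m'N le_kn; rewrite big_distrl /= -(sum_hyper_weight _ n _ le_m'N).
apply: (@leq_trans (\sum_(0 <= j < k.+1)
                      hyper_weight N n m k * hyper_weight N n m' j)).
  rewrite big_nat_cond [leqRHS]big_nat_cond.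
  by apply: leq_sum => j /andP [/andP [_ le_jk] _]; apply: hyper_weight_cross.
rewrite -big_distrr leq_mul2l /=; apply/orP; right.
by rewrite (@big_cat_nat _ _ _ k.+1 0 n.+1) //= leq_addr.
Qed.

Lemma hyper_weight_upper_tail (N n m' m k : nat) : m <= m' -> m' <= N -> k <= n ->
  (\sum_(k <= j < n.+1) hyper_weight N n m j) * hyper_weight N n m' k <=
  hyper_weight N n m k * 'C(N, n).
Proof.
move=> le_m le_m'N le_kn; rewrite big_distrl /= -(sum_hyper_weight _ n _ le_m'N).
apply: (@leq_trans (\sum_(k <= j < n.+1)
                      hyper_weight N n m k * hyper_weight N n m' j)).
  rewrite big_nat_cond [leqRHS]big_nat_cond.
  apply: leq_sum => j /andP [/andP [le_kj _] _].
  by rewrite mulnC [leqRHS]mulnC; apply: hyper_weight_cross.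
rewrite -big_distrr leq_mul2l /=; apply/orP; right.
by rewrite (@big_cat_nat _ _ _ k 0 n.+1) //= ?leq_addl // ltnW.
Qed.

Local Open Scope ring_scope.

Lemma sum_hyp (R : realFieldType) (N n M a b : nat) :
  \sum_(a <= j < b) hyp R N n M j =
  (\sum_(a <= j < b) hyper_weight N n M j)%:R / ('C(N, n))%:R.
Proof. by rewrite /hyp -mulr_suml natr_sum. Qed.

Lemma ler_ratio_nat (R : realFieldType) (s c a d : nat) :
  (0 < c)%N -> (0 < d)%N -> (s * d <= a * c)%N ->
  (s%:R / c%:R : R) <= a%:R / d%:R.
Proof.
move=> c_gt0 d_gt0 le_sa.
by rewrite ler_pdivrMr ?ltr0n // mulrAC ler_pdivlMr ?ltr0n // -!natrM ler_nat.
Qed.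

Theorem corollary5 (R : realFieldType) (N M n : nat) (Mhat : nat -> nat)
  (hMN : (M <= N)%N) (hnN : (n <= N)%N)
  (hMhat : forall k, in_support N n M k -> (k <= Mhat k <= N)%N) :
  forall k, in_support N n M k ->
    ((Mhat k <= M)%N ->
       0 < (('C(Mhat k, k) * 'C(N - Mhat k, n - k))%:R : R) ->
       hyp_le R N n M k <=
         ('C(M, k) * 'C(N - M, n - k))%:R /
         ('C(Mhat k, k) * 'C(N - Mhat k, n - k))%:R) /\
    ((M <= Mhat k)%N ->
       0 < (('C(Mhat k, k) * 'C(N - Mhat k, n - k))%:R : R) ->
       hyp_ge R N n M k <=
         ('C(M, k) * 'C(N - M, n - k))%:R /
         ('C(Mhat k, k) * 'C(N - Mhat k, n - k))%:R).
Proof.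
move=> k supp_k; have /andP [_ le_MhatN] := hMhat k supp_k.
have /andP [le_kn _] := supp_k.
have binN_gt0 : (0 < 'C(N, n))%N by rewrite bin_gt0.
split=> le_M; rewrite ltr0n => weight_gt0.
- rewrite /hyp_le sum_hyp; apply: ler_ratio_nat => //.
  exact: hyper_weight_lower_tail.
- rewrite /hyp_ge sum_hyp; apply: ler_ratio_nat => //.
  exact: hyper_weight_upper_tail.
Qed.
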